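(* Let $\mathbb{F}$ be $\mathbb{R}$ or $\mathbb{C}$, and let $U\in\mathbb{F}(\epsilon)^{r\times n}$ be such that for every $S\subseteq[n]$ of size $r$, $\lim_{\epsilon\to0}\det(U_S)$ exists. Then there exists $\widehat U\in\mathbb{F}^{r\times n}$ such that for every $S\subseteq[n]$ of size $r$, $$\lim_{\epsilon\to 0}\det(U_S)=\det(\widehat U_S).$$
   Context: $\mathbb{F}(\epsilon)$ is the field of rational functions in the indeterminate $\epsilon$; for $c\in\mathbb{F}(\epsilon)$, $\lim_{\epsilon\to0}c$ is the limit of the rational function at $\epsilon=0$ (when it exists). For $S\subseteq[n]$, $U_S$ denotes the submatrix of $U$ formed by the columns indexed by $S$. *)

From HB Require Import structures.
From mathcomp Require Import all_boot all_order all_algebra.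
From mathcomp Require Import reals.
From mathcomp Require Import complex fraction.
Set Implicit Arguments. Unset Strict Implicit. Unset Printing Implicit Defensive.
Import Order.TTheory GRing.Theory Num.Theory.
Local Open Scope ring_scope.

(* F(eps) is modelled as {fraction {poly F}}, the field of fractions of F[eps].
   [lim0 x l] : the rational function x has limit l at eps = 0, i.e. x can be
   written p/q with q(0) <> 0 (so x is defined at 0 after cancellation), and
   l = p(0)/q(0). *)
Definition lim0 (F : fieldType) (x : {fraction {poly F}}) (l : F) : Prop :=
  exists p q : {poly F}, [/\ q.[0] != 0, x = tofrac p / tofrac q & l = p.[0] / q.[0]].

(* det(U_S): the determinant of the r x r submatrix of U formed by the columns
   indexed by S (in increasing order); only meaningful when #|S| = r
   (0 otherwise, never used in that case). *)
Definition minor (R : comRingType) (r n : nat) (U : 'M[R]_(r, n))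
    (S : {set 'I_n}) : R :=
  match #|S| =P r with
  | ReflectT h => \det (castmx (erefl r, h) (colsub (fun j : 'I_#|S| => enum_val j) U))
  | ReflectF _ => 0
  end.

Definition lemma10_prop (F : fieldType) : Prop :=
  forall (r n : nat) (U : 'M[{fraction {poly F}}]_(r, n)),
    (forall S : {set 'I_n}, #|S| = r -> exists l : F, lim0 (minor U S) l) ->
    exists Uh : 'M[F]_(r, n),
      forall S : {set 'I_n}, #|S| = r -> lim0 (minor U S) (minor Uh S).

From HB Require Import structures.
From mathcomp Require Import all_boot all_order all_algebra.
From mathcomp Require Import reals complex fraction perm.
Set Implicit Arguments. Unset Strict Implicit. Unset Printing Implicit Defensive.
Import Order.TTheory GRing.Theory Num.Theory.
Local Open Scope ring_scope.

(* Nothing specific to R or C is used: the proof works over any field.  The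
   rational functions having a limit at 0 form a local ring on which the limit
   is a ring morphism, and each nonzero one is X^k times a unit of that ring.
   Among the nonzero maximal minors of U choose one, det M, of least X-adic
   order.  By Cramer's rule each entry of M^-1 U = adj(M) U / det M is a
   maximal minor of U divided by det M, hence has a limit; call the limit
   matrix B.  As U = M (M^-1 U), the minors of U are det M times those of
   M^-1 U, so their limits are the minors of B with its first row scaled by
   lim det M. *)

Section LimitAtZero.

Variable F : fieldType.
Local Notation K := {fraction {poly F}}.

Definition regular0 (x : K) : Prop := exists l : F, lim0 x l.

Lemma lim0_tofrac_div (p q : {poly F}) :
  q.[0] != 0 -> lim0 (tofrac p / tofrac q) (p.[0] / q.[0]).
Proof. by move=> q0; exists p, q. Qed.

Lemma lim0_0 : lim0 (0 : K) 0.
Proof. by exists 0, 1; rewrite tofrac0 mul0r horner0 mul0r hornerC oner_neq0. Qed.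

Lemma lim0_1 : lim0 (1 : K) 1.
Proof. by exists 1, 1; rewrite tofrac1 divr1 hornerC divr1 oner_neq0. Qed.

Lemma lim0N (x : K) (l : F) : lim0 x l -> lim0 (- x) (- l).
Proof. by case=> p [q [q0 -> ->]]; exists (- p), q; rewrite hornerN tofracN !mulNr. Qed.

Lemma lim0D (x y : K) (l l' : F) : lim0 x l -> lim0 y l' -> lim0 (x + y) (l + l').
Proof.
case=> p [q [q0 -> ->]] [p' [q' [q'0 -> ->]]].
have tofrac_neq0 (s : {poly F}) : s.[0] != 0 -> tofrac s != 0.
  by move=> s0; rewrite tofrac_eq0; apply: contraNneq s0 => ->; rewrite horner0.
exists (p * q' + p' * q), (q * q'); rewrite !hornerD !hornerM mulf_neq0 //.
rewrite (addf_div _ _ (tofrac_neq0 _ q0) (tofrac_neq0 _ q'0)).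
by rewrite tofracD !tofracM (addf_div _ _ q0 q'0).
Qed.

Lemma lim0M (x y : K) (l l' : F) : lim0 x l -> lim0 y l' -> lim0 (x * y) (l * l').
Proof.
case=> p [q [q0 -> ->]] [p' [q' [q'0 -> ->]]].
by exists (p * p'), (q * q'); rewrite !hornerM mulf_neq0 // !tofracM !mulf_div.
Qed.

Lemma lim0_sign (b : bool) : lim0 ((-1) ^+ b : K) ((-1) ^+ b).
Proof. by case: b; rewrite ?expr1 ?expr0; [apply: lim0N|]; exact: lim0_1. Qed.

Lemma lim0_det m (A : 'M[K]_m) (Ah : 'M[F]_m) :
  (forall i j, lim0 (A i j) (Ah i j)) -> lim0 (\det A) (\det Ah).
Proof.
move=> lim_A; rewrite /determinant.
apply: (big_ind2 (@lim0 F)); [exact: lim0_0 | by move=> *; exact: lim0D |].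
move=> s _; apply: lim0M; first exact: lim0_sign.
apply: (big_ind2 (@lim0 F)); [exact: lim0_1 | by move=> *; exact: lim0M |].
by move=> i _; exact: lim_A.
Qed.

Lemma regular0M (x y : K) : regular0 x -> regular0 y -> regular0 (x * y).
Proof. by move=> [l xl] [l' yl']; exists (l * l'); exact: lim0M. Qed.

Lemma regular0_Xn k : regular0 (tofrac 'X ^+ k).
Proof.
have := @lim0_tofrac_div 'X^k 1; rewrite hornerC oner_neq0 tofrac1 divr1 tofracXn.
by move=> /(_ isT) lim_Xk; eexists; exact: lim_Xk.
Qed.

(* 0 has every order, as 0^-1 = 0. *)
Definition has_order0 (x : K) (k : nat) : Prop :=
  exists2 u, x = tofrac 'X ^+ k * u & regular0 u /\ regular0 u^-1.

Lemma regular0_order (x : K) : regular0 x -> x != 0 -> exists k, has_order0 x k.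
Proof.
case=> _ [p [q [q0 -> _]]] x_neq0.
have p_neq0 : p != 0 by apply: contraNneq x_neq0 => ->; rewrite tofrac0 mul0r.
have [k [p1 p1_0 def_p]] := multiplicity_XsubC p 0.
rewrite p_neq0 /root subr0 in p1_0 def_p.
exists k, (tofrac p1 / tofrac q); first by rewrite def_p tofracM tofracXn mulrCA mulrA.
split; first by exists (p1.[0] / q.[0]); exact: lim0_tofrac_div.
by exists (q.[0] / p1.[0]); rewrite invf_div; exact: lim0_tofrac_div.
Qed.

Lemma regular0_div_order (x y : K) (k m : nat) :
  has_order0 x (m + k) -> has_order0 y k -> regular0 (x / y).
Proof.
move=> [u -> [u_reg _]] [v -> [_ v_reg]].
have Xk_neq0 : tofrac ('X : {poly F}) ^+ k != 0.
  by rewrite expf_neq0 // tofrac_eq0 polyX_eq0.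
have -> : tofrac 'X ^+ (m + k) * u / (tofrac 'X ^+ k * v) = tofrac 'X ^+ m * u * v^-1.
  by rewrite invfM exprD mulrAC -!mulrA mulVKf // (mulrC u).
by apply: regular0M => //; apply: regular0M => //; exact: regular0_Xn.
Qed.

Lemma exists_regular0_ratios (I : finType) (c : I -> K) (i1 : I) :
  (forall i, regular0 (c i)) -> c i1 != 0 ->
  exists2 i0, c i0 != 0 & forall i, regular0 (c i / c i0).
Proof.
move=> c_reg ci1_neq0.
have /fin_all_exists[k k_ord] i : exists k, c i != 0 -> has_order0 (c i) k.
  have [-> | ci_neq0] := eqVneq (c i) 0; first by exists 0%N.
  by have [k ?] := regular0_order (c_reg i) ci_neq0; exists k.
case: (@arg_minnP _ i1 (fun i => c i != 0) k ci1_neq0) => i0 ci0_neq0 k_min.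
exists i0 => // i.
have [-> | ci_neq0] := eqVneq (c i) 0; first by rewrite mul0r; exists 0; exact: lim0_0.
apply: (@regular0_div_order _ _ (k i0) (k i - k i0)); last exact: k_ord.
by rewrite subnK ?k_min //; exact: k_ord.
Qed.

End LimitAtZero.

Section MaximalMinors.

Variables (R : comNzRingType) (r n : nat).
Implicit Types (U : 'M[R]_(r, n)) (S : {set 'I_n}).

Lemma minorE U S (h : #|S| = r) :
  minor U S = \det (colsub (fun j => enum_val (cast_ord (esym h) j)) U).
Proof.
rewrite /minor; case: eqP => [h'|/(_ h) //].
rewrite (eq_irrelevance h' h); congr (\det _); apply/matrixP => i j.
by rewrite castmxE !mxE cast_ord_id.
Qed.

Lemma minor_mulmx (A : 'M[R]_r) U S : #|S| = r -> minor (A *m U) S = \det A * minor U S.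
Proof. by move=> h; rewrite !(minorE _ h) -det_mulmx mulmx_colsub. Qed.

Lemma det_colsub_injective U (phi : 'I_r -> 'I_n) : injective phi ->
  exists s : 'S_r, \det (colsub phi U) = (-1) ^+ s * minor U (phi @: setT).
Proof.
move=> phi_inj; set S := phi @: setT.
have h : #|S| = r by rewrite card_imset // cardsT card_ord.
rewrite (minorE _ h); set g := fun j => enum_val _.
have phiS j : phi j \in S by apply: imset_f; rewrite inE.
pose s0 j := cast_ord h (enum_rank_in (phiS j) (phi j)).
have g_s0 j : g (s0 j) = phi j by rewrite /g /s0 cast_ordK enum_rankK_in.
have s0_inj : injective s0 by move=> a b e; apply: phi_inj; rewrite -!g_s0 e.
exists (perm s0_inj)^-1%g.
have -> : colsub phi U = col_perm (perm s0_inj) (colsub g U).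
  by apply/matrixP => i j; rewrite !mxE permE g_s0.
by rewrite col_permE det_mulmx det_perm mulrC.
Qed.

Lemma adj_colsub_mulmxE U (phi : 'I_r -> 'I_n) i j :
  (\adj (colsub phi U) *m U) i j = \det (colsub (fun x => if x == i then j else phi x) U).
Proof.
rewrite (expand_det_col _ i) mxE; apply: eq_bigr => k _; rewrite !mxE eqxx mulrC.
congr (_ * _); rewrite /cofactor; congr (_ * \det _); apply/matrixP => a b.
by rewrite !mxE eq_sym (negbTE (neq_lift _ _)).
Qed.

End MaximalMinors.

Section LimitsOfMinors.

Variable F : fieldType.
Local Notation K := {fraction {poly F}}.

Lemma regular0_det_colsub r n (U : 'M[K]_(r, n)) :
  (forall S : {set 'I_n}, #|S| = r -> regular0 (minor U S)) ->
  forall phi : 'I_r -> 'I_n, regular0 (\det (colsub phi U)).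
Proof.
move=> minor_reg phi.
have [/injectiveP phi_inj | /injectivePn[a [b a_neq_b phi_ab]]] := boolP (injectiveb phi).
- have card_im : #|phi @: setT| = r by rewrite card_imset // cardsT card_ord.
  have [l minor_l] := minor_reg _ card_im.
  have [s ->] := det_colsub_injective U phi_inj.
  by exists ((-1) ^+ s * l); apply: lim0M => //; exact: lim0_sign.
- rewrite -det_tr (determinant_alternate a_neq_b); first by exists 0; exact: lim0_0.
  by move=> x; rewrite !mxE phi_ab.
Qed.

Lemma lim0_minor_mulmx r n (A : 'M[K]_r.+1) (B : 'M[K]_(r.+1, n)) :
  regular0 (\det A) -> (forall i j, regular0 (B i j)) ->
  exists Uh : 'M[F]_(r.+1, n),
    forall S : {set 'I_n}, #|S| = r.+1 -> lim0 (minor (A *m B) S) (minor Uh S).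
Proof.
move=> [a det_a] B_reg.
have /fin_all_exists[b lim_b] (ij : 'I_r.+1 * 'I_n) : regular0 (B ij.1 ij.2) by exact: B_reg.
exists (diag_mx (\row_i (if i == 0 then a else 1)) *m \matrix_(i, j) b (i, j)) => S h.
rewrite !minor_mulmx // det_diag big_ord_recl big1 => [|i _]; last by rewrite !mxE.
rewrite !mxE eqxx mulr1; apply: lim0M => //; rewrite !(minorE _ h).
by apply: lim0_det => i j; rewrite !mxE; exact: (lim_b (i, _)).
Qed.

Lemma lemma10_prop_field : lemma10_prop F.
Proof.
move=> [|r] n U minor_reg.
  by exists 0 => S h; rewrite !(minorE _ h) !det_mx00; exact: lim0_1.
pose c (phi : {ffun 'I_r.+1 -> 'I_n}) := \det (colsub phi U).
have c_reg phi : regular0 (c phi) by exact: regular0_det_colsub.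
have ffun_colsub (f : 'I_r.+1 -> 'I_n) : c [ffun x => f x] = \det (colsub f U).
  by rewrite /c (eq_colsub _ (ffunE _)).
have [c_eq0 | /forallPn[phi1 c1_neq0]] := boolP [forall phi, c phi == 0].
  exists 0 => S h; rewrite !(minorE _ h) -ffun_colsub (eqP (forallP c_eq0 _)).
  have -> : colsub (fun j => enum_val (cast_ord (esym h) j)) (0 : 'M[F]_(r.+1, n)) = 0.
    by apply/matrixP => i j; rewrite !mxE.
  by rewrite det0; exact: lim0_0.
have [phi0 c0_neq0 c_ratio] := exists_regular0_ratios c_reg c1_neq0.
have M_unit : colsub phi0 U \in unitmx by rewrite unitmxE unitfE.
rewrite -(mulKVmx M_unit U); apply: lim0_minor_mulmx => [|i j]; first exact: c_reg.
rewrite /invmx M_unit -scalemxAl mxE adj_colsub_mulmxE mulrC -ffun_colsub.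
exact: c_ratio.
Qed.

End LimitsOfMinors.

Theorem lemma10 (R : realType) : lemma10_prop R /\ lemma10_prop R[i].
Proof. by split; exact: lemma10_prop_field. Qed.
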